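(* Let $n\ge 1$ and let $f_1,\dots,f_n\in\mathcal{B}_c$. Let $X=(X_1,\dots,X_n)$ be a random vector in $\mathbb{R}^n$ (the $X_i$ possibly dependent) such that $P(|X_i|\ge u)\le f_i(u)$ for all $u\ge 0$ and all $i$. Let $g:\mathbb{R}^n\to\mathbb{R}$ be continuous, even in each coordinate, and such that for each $i$ and each fixed choice of the other $n-1$ coordinates, $g$ is strictly increasing in the $i$-th coordinate on $[0,\infty)$. Define $h(s)=g\big(f_1^{-1}(s),\dots,f_n^{-1}(s)\big)$ for $s\in(0,1]$, and suppose $\lim_{s\downarrow 0}h(s)=\infty$. Then for all $t\ge h(1)$, $$P(g(X)\ge t)\le n\,h^{-1}(t).$$ Furthermore, if $f_1(0)=\cdots=f_n(0)=:c$, then with $h$ defined by the same formula on $(0,c]$, the inequality $P(g(X)\ge t)\le n\,h^{-1}(t)$ holds for all $t\ge g(\mathbf{0})$.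
   Context: $\mathcal{B}_c$ is the set of functions $f:[0,\infty)\to(0,\infty)$ that are continuous, strictly decreasing, satisfy $f(0)\ge 1$ and $\lim_{u\to\infty}f(u)=0$; $f_i^{-1}$ denotes the inverse function of $f_i$ (defined on $(0,f_i(0)]$). Under the hypotheses, $h$ is continuous and strictly decreasing, so $h^{-1}(t)$ is the unique $s$ with $h(s)=t$. *)

From HB Require Import structures.
From mathcomp Require Import all_boot all_order all_algebra.
From mathcomp Require Import all_classical all_reals all_analysis.
Set Implicit Arguments. Unset Strict Implicit. Unset Printing Implicit Defensive.
Import Order.TTheory GRing.Theory Num.Theory.
Import numFieldNormedType.Exports.
Local Open Scope classical_set_scope.
Local Open Scope ring_scope.

(* The class B_c: f : [0,oo) -> (0,oo) continuous, strictly decreasing,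
   f 0 >= 1, f u -> 0 as u -> oo.  (f is given as a total function R -> R;
   only its values on [0,oo) matter.) *)
Definition Bc {R : realType} (f : R -> R) : Prop :=
  [/\ {within `[0, +oo[, continuous f},
      {in `[0, +oo[ &, forall x y, x < y -> f y < f x},
      (forall u, 0 <= u -> 0 < f u),
      1 <= f 0
    & f x @[x --> +oo] --> 0].

Definition finv {R : realType} (f : R -> R) (y : R) : R :=
  xget 0 [set u | 0 <= u /\ f u = y].

Definition inv_on {R : realType} (c : R) (h : R -> R) (t : R) : R :=
  xget 0 [set s | 0 < s <= c /\ h s = t].

Definition rowset {R : Type} {n : nat} (x : 'rV[R]_n) (i : 'I_n) (a : R) : 'rV[R]_n :=
  \row_j (if j == i then a else x ord0 j).

Definition hfun {R : realType} {n : nat} (g : 'rV[R]_n -> R) (f : 'I_n -> R -> R)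
  (s : R) : R := g (\row_i finv (f i) s).

From Pilot Require Import Defs.
From HB Require Import structures.
From mathcomp Require Import all_boot all_order all_algebra.
From mathcomp Require Import all_classical all_reals all_analysis.
Import Order.TTheory GRing.Theory Num.Theory.
Import numFieldNormedType.Exports.
Local Open Scope classical_set_scope.
Local Open Scope ring_scope.

(* If |X_i| < f_i^{-1}(s) for every i, then g(X) < g(f_1^{-1}(s), ..., f_n^{-1}(s)) = h(s),
   because g is even and strictly increasing in each |x_i|.  Hence {h(s) <= g(X)} is
   covered by the events {f_i^{-1}(s) <= |X_i|}, each of probability at most
   f_i(f_i^{-1}(s)) = s, and the union bound gives P(h(s) <= g(X)) <= n s.  It remains to
   solve h(s) = t with s in (0, c], for c = 1, or c the common value of the f_i(0), in
   which case h(c) = g(0): h is continuous on (0, c], tends to +oo at 0+ and h(c) <= t,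
   so the intermediate value theorem applies; no monotonicity of h is needed. *)

Section row_surgery.
Context {T : Type} {n : nat}.
Implicit Types (x y : 'rV[T]_n).

Lemma rowsetE x i a j : rowset x i a ord0 j = if j == i then a else x ord0 j.
Proof. by rewrite mxE. Qed.

Lemma rowset_rowset x i a b : rowset (rowset x i a) i b = rowset x i b.
Proof. by apply/rowP => j; rewrite !rowsetE; case: eqP. Qed.

Definition row_splice x y (k : nat) : 'rV[T]_n :=
  \row_j if (j < k)%N then y ord0 j else x ord0 j.

Lemma row_splice0 x y : row_splice x y 0 = x.
Proof. by apply/rowP => j; rewrite mxE. Qed.

Lemma row_splice_full x y : row_splice x y n = y.
Proof. by apply/rowP => j; rewrite mxE ltn_ord. Qed.

Lemma row_spliceS x y k (kn : (k < n)%N) (i := Ordinal kn) :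
  row_splice x y k = rowset (row_splice x y k.+1) i (x ord0 i) /\
  row_splice x y k.+1 = rowset (row_splice x y k.+1) i (y ord0 i).
Proof.
split; apply/rowP => j; rewrite rowsetE !mxE; case: eqP => [->|/eqP ji];
  rewrite ?ltnn ?ltnS ?leqnn //.
rewrite [in RHS]leq_eqVlt (_ : (j == k :> nat) = false) //.
by apply: contraNF ji => /eqP jk; apply/eqP/val_inj.
Qed.

End row_surgery.

Section even_increasing.
Context {R : realDomainType} {n : nat} {g : 'rV[R]_n -> R}.
Implicit Types (x y : 'rV[R]_n).
Hypothesis g_even : forall x i, g (rowset x i (- x ord0 i)) = g x.
Hypothesis g_incr : forall x i a b, 0 <= a -> a < b -> g (rowset x i a) < g (rowset x i b).

Lemma g_rowset_norm x i a : g (rowset x i `|a|) = g (rowset x i a).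
Proof.
have [a0|a0] := leP 0 a; first by rewrite ger0_norm.
by rewrite ltr0_norm // -[RHS](g_even _ i) rowset_rowset rowsetE eqxx.
Qed.

Lemma g_rowset_lt x i a b : `|a| < `|b| -> g (rowset x i a) < g (rowset x i b).
Proof. by rewrite -g_rowset_norm -(g_rowset_norm _ _ b); apply: g_incr. Qed.

Lemma g_rowset_le x i a b : `|a| <= `|b| -> g (rowset x i a) <= g (rowset x i b).
Proof.
rewrite le_eqVlt => /predU1P[ab|/g_rowset_lt/ltW //].
by rewrite -g_rowset_norm ab g_rowset_norm.
Qed.

Let splice_convex : {in [pred k | (k <= n)%N] &, forall i j k, (i < k < j)%N ->
  k \in [pred k | (k <= n)%N]}.
Proof. by move=> i j _; rewrite !inE => jn k /andP[_ /ltnW/leq_trans]; apply. Qed.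

Lemma g_le_norm x y : (forall i, `|x ord0 i| <= `|y ord0 i|) -> g x <= g y.
Proof.
move=> xy; rewrite -[X in g X <= _](row_splice0 x y) -[X in _ <= g X](row_splice_full x y).
apply: (homo_leq_in (D := [pred k | (k <= n)%N]) (f := fun k => g (row_splice x y k))
  lexx le_trans splice_convex); rewrite ?inE //.
move=> k _; rewrite inE => kn; have [-> {2}->] := row_spliceS x y k kn.
exact: g_rowset_le.
Qed.

Lemma g_lt_norm x y : (0 < n)%N ->
  (forall i, `|x ord0 i| < `|y ord0 i|) -> g x < g y.
Proof.
move=> n0 xy; rewrite -[X in g X < _](row_splice0 x y) -[X in _ < g X](row_splice_full x y).
apply: (homo_ltn_in (D := [pred k | (k <= n)%N]) (f := fun k => g (row_splice x y k))
  lt_trans splice_convex); rewrite ?inE //.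
move=> k _; rewrite inE => kn; have [-> {2}->] := row_spliceS x y k kn.
exact: g_rowset_lt.
Qed.

End even_increasing.

(* [Defs.finv] is qualified because fingraph's [finv] shadows it. *)
Section Bc_inverse.
Context {R : realType} {F : R -> R}.
Hypothesis hF : Bc F.

Lemma Bc_lt {u v : R} : 0 <= u -> u < v -> F v < F u.
Proof.
case: hF => _ F_decr _ _ _ u0 uv; apply: F_decr; rewrite ?in_itv /= ?u0 //.
by rewrite andbT (le_trans u0 (ltW uv)).
Qed.

Lemma finvK u : 0 <= u -> Defs.finv F (F u) = u.
Proof.
move=> u0; set w := Defs.finv F (F u).
have [w0 Fw] : [set w | 0 <= w /\ F w = F u] w by apply: xgetPex; exists u.
case: (ltgtP w u) => // [wu|uw].
- by have := Bc_lt w0 wu; rewrite Fw ltxx.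
- by have := Bc_lt u0 uw; rewrite Fw ltxx.
Qed.

Lemma Bc_continuous_itv x : {within `[0, x], continuous F}.
Proof.
case: hF => F_cont _ _ _ _; apply: continuous_subspaceW F_cont.
by move=> z /=; rewrite !in_itv /= => /andP[-> _].
Qed.

Lemma finvP {y} : 0 < y -> y <= F 0 -> 0 <= Defs.finv F y /\ F (Defs.finv F y) = y.
Proof.
move=> y0 yF0; case: (hF) => _ _ _ _ F_to0.
have [M [_ FM]] : \forall x \near +oo, F x < y by exact: (cvgr_lt 0 F_to0).
pose x := Num.max M 0 + 1.
have x0 : 0 < x by rewrite ltr_pwDr // le_max lexx orbT.
have Fxy : F x < y.
  by apply: FM; rewrite (le_lt_trans (_ : M <= Num.max M 0)) ?ltrDl // le_max lexx.
have Fx0 := Bc_lt (lexx 0) x0.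
have := @IVT R F 0 x y (ltW x0) (Bc_continuous_itv x).
rewrite (min_idPr (ltW Fx0)) (max_idPl (ltW Fx0)) (ltW Fxy) yF0.
case=> // u; rewrite in_itv /= => /andP[u0 _] <-.
by rewrite finvK.
Qed.

Lemma finv_continuous a : 0 < a -> a <= F 0 ->
  {within `[a, F 0], continuous (Defs.finv F)}.
Proof.
move=> a0 aF0; have [u0 Fu] := finvP a0 aF0.
have := segment_can_ge_continuous u0 (Bc_continuous_itv _).
by rewrite Fu; apply => v; rewrite in_itv /= => /andP[v0 _]; exact: finvK.
Qed.

End Bc_inverse.

Lemma cvg_row {S : Type} {U : puniformType} {n : nat} {F : set_system S} {FF : Filter F}
    {u : 'I_n -> S -> U} {l : 'I_n -> U} :
  (forall i, u i x @[x --> F] --> l i) -> \row_i u i x @[x --> F] --> \row_i l i.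
Proof.
move=> ul; apply/cvg_mx_entourageP => A entA.
apply: filter_forall => i; apply: filter_forall => j.
apply: filterS ((cvg_app_entourageP _ _ _).1 (ul j) A entA) => x.
by rewrite /= !mxE inE.
Qed.

Section hfun_inverse.
Context {R : realType} {n : nat} {g : 'rV[R]_n -> R} {f : 'I_n -> R -> R} {c : R}.
Hypothesis hf : forall i, Bc (f i).
Hypothesis g_cont : continuous g.
Hypothesis c_gt0 : 0 < c.
Hypothesis c_le_f0 : forall i, c <= f i 0.

Lemma hfun_continuous a : 0 < a -> a <= c -> {within `[a, c], continuous (hfun g f)}.
Proof.
move=> a0 ac; apply/subspace_continuousP => s s_ac.
have finv_cvg i : Defs.finv (f i) x @[x --> within `[a, c] (nbhs s)] --> Defs.finv (f i) s.
  have : {within `[a, c], continuous (Defs.finv (f i))}.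
    apply: (continuous_subspaceW _ (finv_continuous (hf i) _ a0 (le_trans ac (c_le_f0 i)))).
    by move=> z /=; rewrite !in_itv /= => /andP[-> /le_trans->].
  by move/subspace_continuousP => /(_ s s_ac).
exact: continuous_cvg _ (g_cont _) (cvg_row finv_cvg).
Qed.

Lemma inv_onP t : hfun g f c <= t -> hfun g f s @[s --> 0^'+] --> +oo ->
  (0 < inv_on c (hfun g f) t <= c) /\ hfun g f (inv_on c (hfun g f) t) = t.
Proof.
move=> hct h_to_oo; apply: (@xgetPex _ 0 [set s | 0 < s <= c /\ hfun g f s = t]).
have [a [a0 ac tha]] : exists a, [/\ 0 < a, a <= c & t <= hfun g f a].
  near (0:R)^'+ => a; exists a; split; near: a.
  - exact: nbhs_right_gt.
  - exact: nbhs_right_le.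
  - exact: (cvgryPge _).1 h_to_oo t.
have hca := le_trans hct tha.
have := IVT ac (hfun_continuous _ a0 ac).
rewrite (min_idPr hca) (max_idPl hca) => /(_ t); rewrite hct tha => -[// | s].
rewrite in_itv /= => /andP[a_le_s s_le_c] hs; exists s; split => //.
by rewrite s_le_c (lt_le_trans a0 a_le_s).
Unshelve. all: by end_near.
Qed.

End hfun_inverse.

Section measurable_events.
Context {d : measure_display} {T : measurableType d} {R : realType} {n : nat}.
Context {X : 'I_n -> T -> R} {g : 'rV[R]_n -> R}.
Hypothesis mX : forall i, measurable_fun setT (X i).
Hypothesis g_cont : continuous g.
Hypothesis g_even : forall x i, g (rowset x i (- x ord0 i)) = g x.
Hypothesis g_incr : forall x i a b, 0 <= a -> a < b -> g (rowset x i a) < g (rowset x i b).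

Lemma measurable_norm_ge i u : measurable [set w | u <= `|X i w|].
Proof.
rewrite -[X in measurable X]setTI; apply: measurable_fun_le => //.
by apply: measurableT_comp (mX i).
Qed.

Lemma measurable_norm_lt i u : measurable [set w | `|X i w| < u].
Proof.
rewrite (_ : [set w | _] = ~` [set w | u <= `|X i w|]).
  exact/measurableC/measurable_norm_ge.
by apply/seteqP; split => w /=; rewrite ltNge => /negP.
Qed.

Lemma g_lt_rat y t : g y < t -> exists q : {ffun 'I_n -> rat},
  g (\row_i ratr (q i)) < t /\ forall i, `|y ord0 i| < ratr (q i).
Proof.
move=> gyt; pose z := \row_i `|y ord0 i|.
have gz : g z = g y.
  by apply/le_anti; rewrite !(g_le_norm g_even g_incr) // => i; rewrite mxE normr_id.
have : \forall v \near z, g v < t by apply: (cvgr_lt (g z) (g_cont z)); rewrite gz.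
case/nbhs_ballP => e e0 ball_lt.
have /choice[q hq] : forall i, exists q : rat, ratr q \in `]`|y ord0 i|, `|y ord0 i| + e[.
  by move=> i; apply: rat_in_itvoo; rewrite ltrDl.
exists [ffun i => q i]; split => [|i].
  apply: ball_lt; split => // i j; rewrite /ball /= !mxE ffunE ltr_distlC.
  have := hq j; rewrite in_itv /= => /andP[lt_q ->]; rewrite andbT.
  by apply: lt_trans lt_q; rewrite ltrBlDr ltrDl.
by have := hq i; rewrite ffunE in_itv /= => /andP[].
Qed.

(* 'rV[R]_n carries no sigma-algebra, so measurability is shown by hand: the complement
   of the event is a countable union, over rational q with g q < t, of the boxes
   {|X_i| < q_i}. *)
Lemma measurable_g_ge t : measurable [set w | t <= g (\row_i X i w)].
Proof.
pose C (q : {ffun 'I_n -> rat}) : set T := if g (\row_i ratr (q i)) < t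
  then \bigcap_(i in [set: 'I_n]) [set w | `|X i w| < ratr (q i)] else set0.
have -> : [set w | t <= g (\row_i X i w)] = ~` \bigcup_q C q.
  apply/seteqP; split => w /=.
  - move=> tg [q _]; rewrite /C; case: ifP => [gq_lt Xq | _ []].
    suff gXq : g (\row_i X i w) <= g (\row_i ratr (q i)).
      by have := lt_le_trans gq_lt (le_trans tg gXq); rewrite ltxx.
    apply: (g_le_norm g_even g_incr) => i; rewrite !mxE.
    by apply/ltW/(lt_le_trans (Xq i I)); exact: ler_norm.
  - move=> noC; rewrite leNgt; apply/negP => /g_lt_rat[q [gq_lt Xq]]; apply: noC.
    by exists q => //; rewrite /C gq_lt => i _ /=; move: (Xq i); rewrite mxE.
apply/measurableC/countable_bigcupT_measurable => [|q]; first exact: countableP.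
rewrite /C; case: ifP => _; last exact: measurable0.
apply: fin_bigcap_measurable => [|i _]; first exact: finite_finset.
exact: measurable_norm_lt.
Qed.

End measurable_events.

Lemma Boole_inequality_ord {d} {T : ringOfSetsType d} {R : realFieldType}
    (mu : {content set T -> \bar R}) {n : nat} (B : 'I_n -> set T) :
  (forall i, measurable (B i)) -> (mu (\big[setU/set0]_i B i) <= \sum_i mu (B i))%E.
Proof.
case: n B => [B _|n B mB]; first by rewrite !big_ord0 measure0.
rewrite [X in (mu X <= _)%E](eq_bigr (fun i : 'I_n.+1 => B (inord i))) => [|i _];
  last by rewrite inord_val.
rewrite [X in (_ <= X)%E](eq_bigr (fun i : 'I_n.+1 => mu (B (inord i)))) => [|i _];
  last by rewrite inord_val.
by apply: (@Boole_inequality _ _ _ mu (fun k => B (inord k))) => k _.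
Qed.

Section tail_bound.
Context {d : measure_display} {T : measurableType d} {R : realType} {P : probability T R}.
Context {n : nat} {f : 'I_n -> R -> R} {X : 'I_n -> {RV P >-> R}} {g : 'rV[R]_n -> R}.
Hypothesis n_gt0 : (0 < n)%N.
Hypothesis hf : forall i, Bc (f i).
Hypothesis tail : forall i u, 0 <= u -> (P [set w | (u <= `|X i w|)%R] <= (f i u)%:E)%E.
Hypothesis g_cont : continuous g.
Hypothesis g_even : forall x i, g (rowset x i (- x ord0 i)) = g x.
Hypothesis g_incr : forall x i a b, 0 <= a -> a < b -> g (rowset x i a) < g (rowset x i b).
Hypothesis h_to_oo : hfun g f s @[s --> 0^'+] --> +oo.

Let mX i : measurable_fun setT (X i) := measurable_funPT (X i).

Lemma prob_g_ge_hfun s : 0 < s -> (forall i, s <= f i 0) ->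
  (P [set w | (hfun g f s <= g (\row_i X i w))%R] <= (n%:R * s)%:E)%E.
Proof.
move=> s0 s_le_f0; pose u := \row_i Defs.finv (f i) s.
have u_spec i : 0 <= u ord0 i /\ f i (u ord0 i) = s by rewrite mxE; exact: finvP.
pose B i := [set w | u ord0 i <= `|X i w|].
have sub_B : [set w | hfun g f s <= g (\row_i X i w)] `<=` \big[setU/set0]_i B i.
  move=> w /= u_le_X; have [i Bi] : exists i, B i w.
    apply: contrapT => /forallNP X_lt_u.
    have : g (\row_i X i w) < g u.
      apply: (g_lt_norm g_even g_incr _ _ n_gt0) => i; rewrite mxE (ger0_norm (u_spec i).1).
      by rewrite ltNge; apply/negP/X_lt_u.
    by rewrite ltNge u_le_X.
  by rewrite (bigD1 i) //; left.
apply: le_trans (le_measure _ _ _ sub_B) _.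
- by rewrite inE; exact: (measurable_g_ge mX g_cont g_even g_incr).
- by rewrite inE; apply: bigsetU_measurable => i _; exact: (measurable_norm_ge mX).
apply: le_trans (Boole_inequality_ord P B (fun i => measurable_norm_ge mX i _)) _.
have -> : (n%:R * s)%:E = \sum_(i < n) s%:E.
  by rewrite sumEFin sumr_const card_ord mulr_natl.
by apply: lee_sum => i _; have := tail i _ (u_spec i).1; rewrite (u_spec i).2.
Qed.

Lemma prob_g_ge_inv_on c t : 0 < c -> (forall i, c <= f i 0) -> hfun g f c <= t ->
  (P [set w | (t <= g (\row_i X i w))%R] <= (n%:R * inv_on c (hfun g f) t)%:E)%E.
Proof.
move=> c0 c_le_f0 hct.
have [/andP[s0 sc] hs] := inv_onP hf g_cont c0 c_le_f0 t hct h_to_oo.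
rewrite -[X in [set w | X <= _]]hs; apply: prob_g_ge_hfun s0 _ => i.
exact: le_trans sc (c_le_f0 i).
Qed.

End tail_bound.

Theorem theorem2 (R : realType) (d : measure_display) (T : measurableType d)
  (P : probability T R) (n : nat) (hn : (0 < n)%N)
  (f : 'I_n -> R -> R) (X : 'I_n -> {RV P >-> R}) (g : 'rV[R]_n -> R) :
  (forall i, Bc (f i)) ->
  (forall i u, 0 <= u -> (P [set w | (u <= `|X i w|)%R] <= (f i u)%:E)%E) ->
  continuous g ->
  (forall x i, g (rowset x i (- x ord0 i)) = g x) ->
  (forall x i a b, 0 <= a -> a < b -> g (rowset x i a) < g (rowset x i b)) ->
  hfun g f s @[s --> 0^'+] --> +oo ->
  (forall t, hfun g f 1 <= t ->
     (P [set w | (t <= g (\row_i X i w))%R] <= ((n%:R * inv_on 1 (hfun g f) t)%R)%:E)%E)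
  /\
  (forall c, (forall i, f i 0 = c) ->
     forall t, g 0 <= t ->
     (P [set w | (t <= g (\row_i X i w))%R] <= ((n%:R * inv_on c (hfun g f) t)%R)%:E)%E).
Proof.
move=> hf tail g_cont g_even g_incr h_to_oo.
have tail_bound := prob_g_ge_inv_on hn hf tail g_cont g_even g_incr h_to_oo.
split=> [t|c f0_c t g0_t].
  by apply: tail_bound => // i; case: (hf i).
have c0 : 0 < c.
  by case: (hf (Ordinal hn)) => _ _ f_gt0 _ _; rewrite -(f0_c (Ordinal hn)) f_gt0.
apply: tail_bound => // [i|]; first by rewrite f0_c.
suff -> : hfun g f c = g 0 by [].
by congr g; apply/rowP => i; rewrite !mxE -(f0_c i) finvK.
Qed.
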